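(* Let $k\ge 3$ and $n\ge 2$ be integers. Then $\chi_\rho(S^n_{P_k})=3$ if $k=3$ (and $n\ge 2$); $\chi_\rho(S^n_{P_k})=4$ if $k\ge4$ and $n=2$; and $\chi_\rho(S^n_{P_k})=5$ if $k\ge 4$ and $n\ge 3$.
   Context: $P_k$ is the path with vertex set $[k]=\{0,\dots,k-1\}$ and edges $\{i,i+1\}$, $0\le i\le k-2$. For a graph $G$ with vertex set $[k]$ and $n\ge 1$, the generalized Sierpi\'nski graph $S^n_G$ has vertex set $[k]^n$, and $u=u_1\cdots u_n$, $v=v_1\cdots v_n$ are adjacent iff there is $i$ with: $u_j=v_j$ for $j<i$; $u_i\neq v_i$ and $u_iv_i\in E(G)$; and $u_j=v_i$, $v_j=u_i$ for all $j>i$. A packing $c$-coloring of a graph $X$ is a map $f:V(X)\to\{1,\dots,c\}$ such that any two distinct vertices $u,v$ with $f(u)=f(v)=i$ satisfy $d_X(u,v)>i$; the packing chromatic number $\chi_\rho(X)$ is the least such $c$. *)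

From mathcomp Require Import all_boot.
Set Implicit Arguments. Unset Strict Implicit. Unset Printing Implicit Defensive.

Definition path_adj (k : nat) : rel 'I_k :=
  fun i j => (i.+1 == j :> nat) || (j.+1 == i :> nat).

(* Generalized Sierpinski graph S^n_G on words 'I_n -> 'I_k
   (position j of the paper, 1-based, is index j-1 here). *)
Definition sierpinski_adj (k n : nat) (G : rel 'I_k) : rel {ffun 'I_n -> 'I_k} :=
  fun u v => [exists i : 'I_n,
     [&& [forall j : 'I_n, (j < i) ==> (u j == v j)],
         u i != v i, G (u i) (v i) &
         [forall j : 'I_n, (i < j) ==> ((u j == v i) && (v j == u i))]]].

Definition SPk (k n : nat) : rel {ffun 'I_n -> 'I_k} :=
  @sierpinski_adj k n (@path_adj k).

Definition dist_le (T : finType) (e : rel T) (u v : T) (d : nat) : Prop :=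
  exists p : seq T, [/\ path e u p, last u p = v & size p <= d].

Definition packing_coloring (T : finType) (e : rel T) (c : nat) (f : T -> nat) : Prop :=
  (forall x, 1 <= f x <= c) /\
  (forall u v, u != v -> f u = f v -> ~ dist_le e u v (f u)).

Definition packing_colorable (T : finType) (e : rel T) (c : nat) : Prop :=
  exists f : T -> nat, packing_coloring e c f.

Definition packing_chromatic_number_is (T : finType) (e : rel T) (c : nat) : Prop :=
  packing_colorable e c /\ (forall c', packing_colorable e c' -> c <= c').
Arguments SPk : clear implicits.

From mathcomp Require Import all_boot zify.
Set Implicit Arguments. Unset Strict Implicit. Unset Printing Implicit Defensive.

(* Every edge changes the parity of u_n, hence two vertices whose last letters
   have the same parity are at even distance.  Colour 1 goes to an even u_n.
   For k = 3 the remaining vertices (u_n = 1) get 2 or 3 according to the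
   parity of u_(n-1); two such vertices at distance 2 share a neighbour, and
   inspecting the possible neighbours shows that one of them has
   u_(n-1) = u_n while the other has u_(n-1) adjacent to u_n, so their
   colours differ.  For k >= 4, an odd u_n with u_(n-1) <> u_n gets 2 or 3
   according to u_n mod 4, and an odd u_n with u_(n-1) = u_n gets 4 or 5
   according to the parity of u_(n-2); the same neighbourhood analysis,
   pushed to distance 4 in the last case, shows that this is a packing
   colouring (and colour 5 does not occur for n = 2).
   The lower bounds come from small subgraphs of S^2_{P_2}, S^2_{P_4} and
   S^3_{P_4}, embedded in S^n_{P_k} by a constant prefix, which admit no
   packing colouring with fewer colours; this is checked by computing their
   distances by breadth-first search and searching all colourings. *)

Definition adjn (a b : nat) : bool := (a.+1 == b) || (b.+1 == a).

Lemma adjnC a b : adjn a b = adjn b a.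
Proof. by rewrite /adjn orbC. Qed.

Lemma adjn_neq a b : adjn a b -> a != b.
Proof. rewrite /adjn; lia. Qed.

Lemma adjn_odd a b : adjn a b -> odd b = ~~ odd a.
Proof. by case/orP=> /eqP <- //=; rewrite negbK. Qed.

Lemma nth_nseq_cat T (x0 a b : T) m t : nth x0 (nseq m b ++ a :: t) m = a.
Proof. by rewrite nth_cat size_nseq ltnn subnn. Qed.

Lemma drop_nseq_cat T (a b : T) m t : drop m.+1 (nseq m b ++ a :: t) = t.
Proof. by rewrite drop_cat size_nseq ltnNge leqnSn subSnn /= drop0. Qed.

Lemma nth_nseq_cat_cases T (x0 a b : T) m t x :
  nth x0 (nseq m b ++ a :: t) x =
  if x < m then b else if x == m then a else nth x0 t (x - m.+1).
Proof.
rewrite nth_cat size_nseq nth_nseq; case: ltnP => // le_mx.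
case: eqP => [->|ne_xm]; first by rewrite subnn.
by have -> : x - m = (x - m.+1).+1 by lia.
Qed.

Lemma nseq_cat_inj (T : eqType) (b a a' : T) m m' t t' :
  nseq m b ++ a :: t = nseq m' b ++ a' :: t' -> a != b -> a' != b ->
  [/\ m = m', a = a' & t = t'].
Proof.
elim: m m' => [|m IH] [|m'] /=.
- by case=> -> ->.
- by case=> ->; rewrite eqxx.
- by case=> <- _ _; rewrite eqxx.
- by case=> /IH H /H H' /H' [-> -> ->].
Qed.

(* The vertex u_1 ... u_n of S^n_{P_k} is encoded by its letters in reverse
   order [:: u_n; ...; u_1], so that two vertices are adjacent exactly when
   they read b^m a t and a^m b t for adjacent letters a, b. *)
Definition word_adj (s s' : seq nat) : bool :=
  has (fun m => let a := nth 0 s m in let b := nth 0 s' m in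
    [&& s == nseq m b ++ a :: drop m.+1 s, s' == nseq m a ++ b :: drop m.+1 s
      & adjn a b])
  (iota 0 (size s)).

Lemma word_adjP s s' :
  reflect (exists m a b t,
             [/\ s = nseq m b ++ a :: t, s' = nseq m a ++ b :: t & adjn a b])
          (word_adj s s').
Proof.
apply: (iffP hasP) => [[m _ /and3P [/eqP es /eqP es' ab]]|[m [a [b [t [es es' ab]]]]]].
  by exists m, (nth 0 s m), (nth 0 s' m), (drop m.+1 s).
exists m; first by rewrite mem_iota es size_cat size_nseq /= addnS ltnS leq_addr.
by rewrite es es' !nth_nseq_cat drop_nseq_cat /= !eqxx.
Qed.

Lemma word_adj_sym : symmetric word_adj.
Proof.
move=> s s'; apply/word_adjP/word_adjP => -[m [a [b [t [-> -> ab]]]]];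
  by exists m, b, a, t; rewrite adjnC.
Qed.

Lemma word_adj_size s s' : word_adj s s' -> size s = size s'.
Proof. by case/word_adjP=> [m [a [b [t [-> -> _]]]]]; rewrite !size_cat !size_nseq. Qed.

Lemma word_adj_catr s s' z : word_adj s s' -> word_adj (s ++ z) (s' ++ z).
Proof.
case/word_adjP=> [m [a [b [t [-> -> ab]]]]]; apply/word_adjP.
by exists m, a, b, (t ++ z); rewrite -!catA.
Qed.

Lemma word_adj_head s s' : word_adj s s' -> adjn (head 0 s) (head 0 s').
Proof. by case/word_adjP=> [[|m] [a [b [t [-> -> ab]]]]] //=; rewrite adjnC. Qed.

Lemma odd_head_path s p :
  path word_adj s p -> odd (head 0 (last s p)) = odd (head 0 s) (+) odd (size p).
Proof.
elim: p s => [|x p IHp] s /=; first by rewrite addbF.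
case/andP=> /word_adj_head/adjn_odd sx /IHp ->; rewrite sx.
by case: (odd (head 0 s)); case: (odd (size p)).
Qed.

Lemma flip_uniq m m' (a a' b b' : nat) t t' :
  nseq m.+1 b ++ a :: t = nseq m'.+1 b' ++ a' :: t' -> adjn a b -> adjn a' b' ->
  nseq m.+1 a ++ b :: t = nseq m'.+1 a' ++ b' :: t'.
Proof.
case=> <-{b'} /nseq_cat_inj eq_w /adjn_neq ab /adjn_neq ab'.
by case: (eq_w ab ab') => -> -> ->.
Qed.

Definition doubled (s : seq nat) : bool := nth 0 s 1 == head 0 s.

Lemma two_step_same_head s w s' :
  word_adj s w -> word_adj w s' -> s != s' -> head 0 s = head 0 s' ->
  doubled s && adjn (nth 0 s' 1) (head 0 s') || doubled s' && adjn (nth 0 s 1) (head 0 s).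
Proof.
rewrite word_adj_sym => /word_adjP [[|m] [a [b [t [-> -> ab]]]]].
all: move=> /word_adjP [[|m'] [a' [b' [t' [ew -> ab']]]]] /=.
- by case: ew => _ -> ne eb; rewrite eb eqxx in ne.
- case: ew => _ ->; case: m' => [|m'] /= _; move: ab'; rewrite /doubled /adjn /=; lia.
- case: ew => _ <-; case: m => [|m] /= _; move: ab; rewrite /doubled /adjn /=; lia.
- by move=> /negP[]; apply/eqP/(flip_uniq ew ab ab').
Qed.

Lemma two_step_doubled s w s' :
  word_adj s w -> word_adj w s' -> doubled s -> doubled s' -> s = s'.
Proof.
rewrite word_adj_sym => /word_adjP [[|m] [a [b [t [-> -> ab]]]]].
all: move=> /word_adjP [[|m'] [a' [b' [t' [ew -> ab']]]]] /=.
- by case: ew => _ <-; rewrite /doubled /= => /eqP <- /eqP <-.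
- case: ew => ea ->; subst a.
  by case: m' => [|m'] /=; move: ab ab'; rewrite /doubled /adjn /=; lia.
- case: ew => eb <-; subst a'.
  by case: m => [|m] /=; move: ab ab'; rewrite /doubled /adjn /=; lia.
- by move=> _ _; apply: (flip_uniq ew ab ab').
Qed.

Definition doubled_reach (y : nat) q x : Prop :=
  [\/ exists c, x = [:: c, y & q] /\ (c = y.+2 \/ c.+2 = y),
      exists c, x = [:: y, c & q] /\ adjn c y
    | exists m a r c, [/\ [:: y, y & q] = nseq m.+2 y ++ a :: r, adjn a y,
                        x = c :: nseq m.+1 a ++ y :: r & adjn c a]].

Lemma doubled_reach_two_steps y q x1 x2 :
  word_adj [:: y, y & q] x1 -> word_adj x1 x2 -> x2 != [:: y, y & q] ->
  doubled_reach y q x2.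
Proof.
move=> /word_adjP [[|[|m]] [a [b [t [es -> ab]]]]].
- case: es => ea et; subst a t.
  move=> /word_adjP [[|[|m']] [a' [b' [t' [ex -> ab']]]]] ne.
  + case: ex => ea et; subst a' t'; apply: Or31; exists b'; split=> //.
    have ne_b'y : b' != y by apply: contraNneq ne => ->.
    by move: ne_b'y ab ab'; rewrite /adjn; lia.
  + case: ex => eb ea et; subst b' a' t'; apply: Or32; exists b.
    by split=> //; rewrite adjnC.
  + by case: ex => <- eyb; move: ab; rewrite eyb /adjn; lia.
- by case: es => eyb eya; move: ab; rewrite -eyb -eya /adjn; lia.
- case: es => eb _ es; subst b.
  move=> /word_adjP [[|m'] [a' [b' [t' [ex -> ab']]]]] ne.
  + case: ex => ea et; subst a' t'; apply: Or33; exists m, a, t, b'.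
    by split=> //; [rewrite es | rewrite adjnC].
  + have ay : adjn y a by rewrite adjnC.
    by move: ne; rewrite -(flip_uniq ex ay ab') /= -es eqxx.
Qed.

Lemma doubled_reach_parity y y' q q' x :
  doubled_reach y q x -> doubled_reach y' q' x ->
  [:: y, y & q] = [:: y', y' & q'] \/ odd (nth 0 q 0) != odd (nth 0 q' 0).
Proof.
have flip_parity m (a b : nat) r : adjn a b ->
    odd (nth 0 (nseq m b ++ a :: r) 0) != odd (nth 0 (nseq m a ++ b :: r) 0).
  by case: m => [|m] /= /adjn_odd ->; case: (odd _).
case=> [[c [-> hc]]|[c [-> hc]]|[m [a [r [c [es ha -> hc]]]]]].
all: case=> [[c' [ex hc']]|[c' [ex hc']]|[m' [a' [r' [c' [es' ha' ex hc']]]]]].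
1-8: case: ex => *; subst.
- by left.
- by move: hc hc'; rewrite /adjn; lia.
- by move: hc hc'; rewrite /adjn; lia.
- by move: hc hc'; rewrite /adjn; lia.
- by left.
- case: es' => ->; right; apply: flip_parity; by rewrite adjnC.
- by move: hc hc'; rewrite /adjn; lia.
- case: es => ->; right; rewrite eq_sym; apply: flip_parity; by rewrite adjnC.
- rewrite adjnC in ha; rewrite adjnC in ha'.
  case: ex => ec ea; subst c' a' => /nseq_cat_inj eq_tail.
  case: (eq_tail (adjn_neq ha) (adjn_neq ha')) => em ey er; subst m' y' r'.
  by left; rewrite es es'.
Qed.

Lemma path_even_size s p :
  path word_adj s p -> odd (head 0 (last s p)) = odd (head 0 s) -> ~~ odd (size p).
Proof. by move/odd_head_path=> ->; case: (odd _); case: (odd _). Qed.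

Lemma even_walk_common_neighbor s s' p :
  path word_adj s p -> last s p = s' -> s != s' ->
  odd (head 0 s) = odd (head 0 s') -> size p <= 3 ->
  exists w, word_adj s w && word_adj w s'.
Proof.
move=> ps ls ne par; have := path_even_size ps; rewrite ls -par => /(_ erefl).
case: p ps ls => [|x1 [|x2 [|x3 p]]] //=; first by move=> _ eq_s; rewrite eq_s eqxx in ne.
  by case/and3P=> sx1 x12 _ <- _ _; exists x1; rewrite sx1.
by move=> *; lia.
Qed.

Lemma doubled_shape s :
  odd (head 0 s) -> doubled s -> s = [:: head 0 s, head 0 s & drop 2 s].
Proof.
rewrite /doubled; case: s => [|y [|z q]] //= oy /eqP ey; first by rewrite -ey in oy.
by rewrite ey drop0.
Qed.

Lemma undoubled_separated s s' p :
  odd (head 0 s) -> odd (head 0 s') -> ~~ doubled s -> ~~ doubled s' ->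
  head 0 s = head 0 s' %[mod 4] -> s != s' ->
  path word_adj s p -> last s p = s' -> 3 < size p.
Proof.
move=> os os' ds ds' mod_eq ne ps ls; rewrite ltnNge; apply/negP => le3.
have [w /andP [ws ws']] := even_walk_common_neighbor ps ls ne (etrans os (esym os')) le3.
have eq_head : head 0 s = head 0 s'.
  move: (word_adj_head ws) (word_adj_head ws') os os' mod_eq; rewrite /adjn; lia.
by move: (two_step_same_head ws ws' ne eq_head); rewrite (negbTE ds) (negbTE ds').
Qed.

Lemma small_head_separated s s' p :
  odd (head 0 s) -> odd (head 0 s') -> head 0 s < 3 -> head 0 s' < 3 ->
  odd (nth 0 s 1) = odd (nth 0 s' 1) -> s != s' ->
  path word_adj s p -> last s p = s' -> 3 < size p.
Proof.
move=> os os' s3 s3' par ne ps ls; rewrite ltnNge; apply/negP => le3.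
have [w /andP [ws ws']] := even_walk_common_neighbor ps ls ne (etrans os (esym os')) le3.
have eq_head : head 0 s = head 0 s' by move: os os' s3 s3'; lia.
move: (two_step_same_head ws ws' ne eq_head) par; rewrite /doubled eq_head.
by case/orP=> /andP [/eqP -> /adjn_odd ->]; case: (odd _).
Qed.

Lemma doubled_separated s s' p :
  odd (head 0 s) -> odd (head 0 s') -> doubled s -> doubled s' ->
  odd (nth 0 s 2) = odd (nth 0 s' 2) -> s != s' ->
  path word_adj s p -> last s p = s' -> 5 < size p.
Proof.
move=> os os' ds ds' par ne ps ls; rewrite ltnNge; apply/negP => le5.
have := path_even_size ps; rewrite ls os os' => /(_ erefl).
case: p ps ls le5 => [|x1 [|x2 [|x3 [|x4 [|x5 [|x6 p]]]]]] //=.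
- by move=> _ eq_s; rewrite eq_s eqxx in ne.
- case/and3P=> sx1 x12 _ eq_x2 _ _; subst x2.
  by move: ne; rewrite (two_step_doubled sx1 x12 ds ds') eqxx.
case/and5P=> sx1 x12 x23 x34 _ eq_x4 _ _; subst x4.
have [eq_x2|ne_x2] := eqVneq x2 s.
  subst x2; move: ne.
  by rewrite (two_step_doubled x23 x34 ds ds') eqxx.
have [eq_x2'|ne_x2'] := eqVneq x2 s'.
  subst x2; move: ne.
  by rewrite (two_step_doubled sx1 x12 ds ds') eqxx.
move: sx1 x34 ne ne_x2 ne_x2' par.
rewrite (doubled_shape os ds) (doubled_shape os' ds') => sx1 x34 ne ne_x2 ne_x2'.
have r := doubled_reach_two_steps sx1 x12 ne_x2.
rewrite word_adj_sym in x23; rewrite word_adj_sym in x34.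
have r' := doubled_reach_two_steps x34 x23 ne_x2'.
case: (doubled_reach_parity r r') => [eq_s|]; first by rewrite eq_s eqxx in ne.
by move=> par_ne /= par; rewrite par eqxx in par_ne.
Qed.

Lemma even_head_separated s s' p :
  ~~ odd (head 0 s) -> ~~ odd (head 0 s') -> s != s' ->
  path word_adj s p -> last s p = s' -> 1 < size p.
Proof.
move=> es es' ne ps ls; have := path_even_size ps.
rewrite ls (negbTE es) (negbTE es') => /(_ erefl).
by case: p ps ls => [|x [|y p]] //= _ eq_s; rewrite eq_s eqxx in ne.
Qed.

(** * The colourings *)

Definition color3 (s : seq nat) : nat :=
  if ~~ odd (head 0 s) then 1 else if ~~ odd (nth 0 s 1) then 2 else 3.

Definition color4 (s : seq nat) : nat :=
  if ~~ odd (head 0 s) then 1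
  else if ~~ doubled s then (if head 0 s %% 4 == 1 then 2 else 3)
  else if odd (nth 0 s 2) then 5 else 4.

Lemma color3_separated s s' p :
  head 0 s < 3 -> head 0 s' < 3 -> s != s' -> color3 s = color3 s' ->
  path word_adj s p -> last s p = s' -> color3 s < size p.
Proof.
move=> s3 s3' ne.
have [os|es] := boolP (odd (head 0 s)); have [os'|es'] := boolP (odd (head 0 s'));
  rewrite /color3 ?os ?os' ?es ?es' /=; try by case: ifP.
- move=> eq_col ps ls; have par : odd (nth 0 s 1) = odd (nth 0 s' 1).
    by move: eq_col; do 2 case: (odd _).
  by apply: leq_trans (small_head_separated os os' s3 s3' par ne ps ls); case: ifP.
- by move=> _; apply: even_head_separated.
Qed.

Lemma color4_separated s s' p :
  s != s' -> color4 s = color4 s' ->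
  path word_adj s p -> last s p = s' -> color4 s < size p.
Proof.
move=> ne.
have [os|es] := boolP (odd (head 0 s)); have [os'|es'] := boolP (odd (head 0 s'));
  rewrite /color4 ?os ?os' ?es ?es' /=; try by do ! case: ifP.
- have [ds|nds] := boolP (doubled s); have [ds'|nds'] := boolP (doubled s');
    rewrite ?ds ?ds' ?nds ?nds' /=; try by do ! case: ifP.
  + move=> eq_col ps ls; have par : odd (nth 0 s 2) = odd (nth 0 s' 2).
      by move: eq_col; do 2 case: (odd _).
    by apply: leq_trans (doubled_separated os os' ds ds' par ne ps ls); case: ifP.
  + move=> eq_col ps ls; have mod_eq : head 0 s = head 0 s' %[mod 4].
      by move: eq_col os os'; do 2 case: ifP; lia.
    by apply: leq_trans (undoubled_separated os os' nds nds' mod_eq ne ps ls); case: ifP.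
- by move=> _; apply: even_head_separated.
Qed.

Section Words.

Variables k n : nat.
Implicit Types u v w : {ffun 'I_n -> 'I_k}.

Definition word_of u : seq nat := [seq val (u (rev_ord i)) | i <- enum 'I_n].

Lemma size_word_of u : size (word_of u) = n.
Proof. by rewrite size_map size_enum_ord. Qed.

Lemma nth_word_of u (i : 'I_n) : nth 0 (word_of u) i = u (rev_ord i).
Proof. by rewrite (nth_map i) ?size_enum_ord // nth_ord_enum. Qed.

Lemma nth_word_of_rev u (i : 'I_n) : nth 0 (word_of u) (n - i.+1) = u i.
Proof. by rewrite -[n - i.+1]/(nat_of_ord (rev_ord i)) nth_word_of rev_ordK. Qed.

Lemma word_of_inj : injective word_of.
Proof.
move=> u v eq_uv; apply/ffunP => i; apply: val_inj => /=.
by rewrite -!nth_word_of_rev eq_uv.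
Qed.

Lemma word_of_letters u : all (fun x => x < k) (word_of u).
Proof. by apply/allP => x /mapP [i _ ->]; apply: ltn_ord. Qed.

Lemma word_of_splice u w (i : 'I_n) c :
  (forall j : 'I_n, i < j -> val (w j) = c) -> (forall j : 'I_n, j < i -> w j = u j) ->
  word_of w = nseq (n - i.+1) c ++ val (w i) :: drop (n - i) (word_of u).
Proof.
move=> after before; apply: (@eq_from_nth _ 0).
  by rewrite size_cat size_nseq /= size_drop !size_word_of; have := ltn_ord i; lia.
move=> x; rewrite size_word_of => lt_xn; have lt_in := ltn_ord i.
rewrite -[x]/(nat_of_ord (Ordinal lt_xn)) nth_word_of nth_nseq_cat_cases /=.
case: ltnP => [lt_x|ge_x].
  by apply: after => /=; lia.
case: eqP => [eq_x|ne_x].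
  by rewrite (_ : rev_ord _ = i) //; apply: val_inj => /=; lia.
rewrite nth_drop (_ : n - i + _ = Ordinal lt_xn); last by rewrite /=; lia.
by rewrite nth_word_of before //=; lia.
Qed.

Lemma SPk_word_adj u v : SPk k n u v = word_adj (word_of u) (word_of v).
Proof.
apply/existsP/word_adjP => [[i /and4P [/forallP before _ adj /forallP after]]|].
  exists (n - i.+1), (val (u i)), (val (v i)), (drop (n - i) (word_of u)).
  split=> //; apply: word_of_splice => // j lt_ij.
  - by case/andP: (implyP (after j) lt_ij) => /eqP ->.
  - by case/andP: (implyP (after j) lt_ij) => _ /eqP ->.
  - by apply/eqP; rewrite eq_sym; apply: (implyP (before j)).
move=> [m [a [b [t [eq_u eq_v ab]]]]].
have lt_m : m < n.
  by move: (size_word_of u); rewrite eq_u size_cat size_nseq /=; lia.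
have lt_mn : n - m.+1 < n by lia.
have letter_u (j : 'I_n) : val (u j) = nth 0 (nseq m b ++ a :: t) (n - j.+1).
  by rewrite -eq_u nth_word_of_rev.
have letter_v (j : 'I_n) : val (v j) = nth 0 (nseq m a ++ b :: t) (n - j.+1).
  by rewrite -eq_v nth_word_of_rev.
have mn : n - (n - m.+1).+1 = m by lia.
exists (Ordinal lt_mn); apply/and4P; split.
- apply/forallP => j; apply/implyP => /= lt_j; apply/eqP/val_inj.
  by rewrite letter_u letter_v !nth_nseq_cat_cases !ifN //; lia.
- by rewrite -(inj_eq val_inj) letter_u letter_v /= mn !nth_nseq_cat adjn_neq.
- by rewrite /path_adj -/(adjn _ _) letter_u letter_v /= mn !nth_nseq_cat.
- apply/forallP => j; apply/implyP => /= lt_j.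
  have lt_jm : n - j.+1 < m by have := ltn_ord j; lia.
  by apply/andP; split; apply/eqP/val_inj;
    rewrite /= letter_u letter_v mn !nth_nseq_cat_cases lt_jm ltnn eqxx.
Qed.

Lemma path_word_of u p : path (SPk k n) u p = path word_adj (word_of u) (map word_of p).
Proof. by rewrite path_map; apply: eq_path => x y; apply: SPk_word_adj. Qed.

Definition of_word (d : 'I_k) (s : seq nat) : {ffun 'I_n -> 'I_k} :=
  [ffun j : 'I_n => insubd d (nth 0 s (n - j.+1))].

Lemma word_of_of_word d s :
  size s = n -> all (fun x => x < k) s -> word_of (of_word d s) = s.
Proof.
move=> size_s /(all_nthP 0) letters; apply: (@eq_from_nth _ 0).
  by rewrite size_word_of.
move=> x; rewrite size_word_of => lt_xn.
rewrite -[x]/(nat_of_ord (Ordinal lt_xn)) nth_word_of ffunE val_insubd /=.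
by rewrite (_ : n - (n - x.+1).+1 = x) ?letters ?size_s //; lia.
Qed.

Lemma path_of_word d s p :
  size s = n -> all (fun x => x < k) s -> all (all (fun x => x < k)) p ->
  path word_adj s p -> path (SPk k n) (of_word d s) (map (of_word d) p).
Proof.
elim: p s => [|t p IHp] s //= size_s letters_s /andP [letters_t letters_p] /andP [st tp].
have size_t : size t = n by rewrite -(word_adj_size st).
by rewrite SPk_word_adj !word_of_of_word // st IHp.
Qed.

End Words.

Lemma packing_colorable_words k n c (col : seq nat -> nat) :
  (forall u : {ffun 'I_n -> 'I_k}, 0 < col (word_of u) <= c) ->
  (forall (u v : {ffun 'I_n -> 'I_k}) p,
     word_of u != word_of v -> col (word_of u) = col (word_of v) ->
     path word_adj (word_of u) p -> last (word_of u) p = word_of v ->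
     col (word_of u) < size p) ->
  packing_colorable (SPk k n) c.
Proof.
move=> col_range col_sep; exists (col \o @word_of k n); split=> // u v ne eq_col.
case=> p [pu lp sp]; move: (col_sep u v (map (@word_of k n) p)).
rewrite (inj_eq (@word_of_inj k n)) size_map -path_word_of last_map lp.
by move=> /(_ ne eq_col pu erefl); rewrite ltnNge sp.
Qed.

Lemma head_word_of k n (u : {ffun 'I_n -> 'I_k}) : 0 < k -> head 0 (word_of u) < k.
Proof. by case: (word_of u) (word_of_letters u) => //= x s /andP []. Qed.

Lemma packing_colorable3 n : packing_colorable (SPk 3 n) 3.
Proof.
apply: (packing_colorable_words (col := color3)) => [u|u v p].
  by rewrite /color3; do ! case: ifP.
by apply: color3_separated; apply: head_word_of.
Qed.

Lemma packing_colorable5 k n : packing_colorable (SPk k n) 5.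
Proof.
apply: (packing_colorable_words (col := color4)) => [u|u v p].
  by rewrite /color4; do ! case: ifP.
exact: color4_separated.
Qed.

(* On words of length 2 the default value [nth 0 s 2 = 0] keeps [color4] below 5. *)
Lemma packing_colorable4 k : packing_colorable (SPk k 2) 4.
Proof.
apply: (packing_colorable_words (col := color4)) => [u|u v p].
  rewrite /color4 nth_default ?size_word_of //.
  by do ! case: ifP.
exact: color4_separated.
Qed.

(** * Lower bounds by exhaustive search *)

Definition word_nbrs (kk : nat) (s : seq nat) : seq (seq nat) :=
  [seq t <- [seq nseq m (nth 0 s m) ++ b :: drop m.+1 s
              | m <- iota 0 (size s), b <- iota 0 kk]
     | word_adj s t && all (fun x => x < kk) t].

Fixpoint ball (kk d : nat) (s : seq nat) : seq (seq nat) :=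
  if d is d'.+1 then
    let B := ball kk d' s in undup (B ++ flatten (map (word_nbrs kk) B))
  else [:: s].

Lemma ballP kk d s t :
  t \in ball kk d s -> exists p,
    [/\ path word_adj s p, last s p = t, size p <= d & all (all (fun x => x < kk)) p].
Proof.
elim: d t => [|d IHd] t /=; first by rewrite inE => /eqP ->; exists [::].
rewrite mem_undup mem_cat => /orP [/IHd [p [ps lp sp kp]]|].
  by exists p; split=> //; apply: leqW.
case/flatten_mapP=> x /IHd [p [ps lp sp kp]].
rewrite mem_filter => /andP [/andP [xt kt] _].
exists (rcons p t); rewrite rcons_path last_rcons size_rcons all_rcons.
by rewrite ps lp xt kt kp.
Qed.

(* Equals [C.+1] when [t] is not within distance [C] of [s]. *)
Definition word_dist (kk C : nat) (s t : seq nat) : nat :=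
  find (fun d => t \in ball kk d s) (iota 0 C.+1).

Lemma word_dist_walk kk C s t : word_dist kk C s t <= C -> exists p,
  [/\ path word_adj s p, last s p = t, size p <= word_dist kk C s t
    & all (all (fun x => x < kk)) p].
Proof.
move=> le_C; apply: ballP.
have has_d : has (fun d => t \in ball kk d s) (iota 0 C.+1).
  by rewrite has_find size_iota.
by have := nth_find 0 has_d; rewrite nth_iota.
Qed.

Definition dist_table (kk C : nat) (W : seq (seq nat)) : seq (seq nat) :=
  [seq [seq word_dist kk C v w | w <- W] | v <- W].

Definition fits (dt : seq (seq nat)) (col : seq nat) (c : nat) : bool :=
  all (fun i => (nth 0 col i != c) || (c < nth 0 (nth [::] dt i) (size col)))
      (iota 0 (size col)).

(* The distances come as a precomputed table, and [if] is used rather than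
   [&&], so that [vm_compute] neither recomputes distances nor explores
   pruned branches. *)
Fixpoint search_coloring C (dt : seq (seq nat)) (col : seq nat) fuel : bool :=
  if fuel is f.+1 then
    has (fun c => if fits dt col c then search_coloring C dt (rcons col c) f else false)
        (iota 1 C)
  else true.

Lemma search_coloring_complete C dt N (g : nat -> nat) :
  (forall i, i < N -> 0 < g i <= C) ->
  (forall i j, i < j < N -> g i = g j -> g i < nth 0 (nth [::] dt i) j) ->
  search_coloring C dt [::] N.
Proof.
move=> g_range g_sep.
suff extend l f : l + f = N -> search_coloring C dt (mkseq g l) f by apply: (extend 0).
elim: f l => [|f IHf] l //= eq_N; apply/hasP; exists (g l).
  by rewrite mem_iota; have := g_range l; lia.
have -> : fits dt (mkseq g l) (g l).
  apply/allP => i; rewrite size_mkseq mem_iota => /andP [_ lt_il].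
  rewrite nth_mkseq //; case: eqVneq => //= eq_g.
  by rewrite -eq_g; apply: g_sep => //; lia.
by rewrite -mkseqS IHf //; lia.
Qed.

Lemma dist_le_padded k n (d : 'I_k) s z p c :
  size (s ++ z) = n -> all (fun x => x < k) (s ++ z) -> all (all (fun x => x < k)) p ->
  path word_adj s p -> size p <= c ->
  dist_le (SPk k n) (of_word n d (s ++ z)) (of_word n d (last s p ++ z)) c.
Proof.
rewrite all_cat => size_sz /andP [letters_s letters_z] letters_p ps le_c.
exists (map (of_word n d \o cat^~ z) p); split; last 2 first.
- by rewrite map_comp last_map (last_map (cat^~ z)).
- by rewrite size_map.
rewrite map_comp; apply: path_of_word; rewrite ?all_cat ?letters_s //.
  by rewrite all_map; apply: sub_all letters_p => w lw /=; rewrite all_cat lw.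
rewrite (path_map (f := cat^~ z)); apply: (sub_path _ ps) => x y.
exact: word_adj_catr.
Qed.

Lemma no_packing_coloring k n kk m C (W : seq (seq nat)) :
  0 < kk <= k -> m <= n -> uniq W ->
  all (fun w => (size w == m) && all (fun x => x < kk) w) W ->
  ~~ search_coloring C (dist_table kk C W) [::] (size W) ->
  forall f, ~ packing_coloring (SPk k n) C f.
Proof.
case/andP=> kk_gt0 le_kk le_mn uniq_W valid_W /negP no_col f [f_range f_sep].
have k_gt0 := leq_trans kk_gt0 le_kk; pose d : 'I_k := Ordinal k_gt0.
have letters_lt : subpred (fun x => x < kk) (fun x => x < k).
  by move=> x /leq_trans; apply.
pose z := nseq (n - m) 0; pose embed i := of_word n d (nth [::] W i ++ z).
have valid_nth i : i < size W ->
    [/\ size (nth [::] W i) = m, size (nth [::] W i ++ z) = n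
      & all (fun x => x < k) (nth [::] W i ++ z)].
  move=> lt_i; have /andP [/eqP size_w letters_w] := allP valid_W _ (mem_nth [::] lt_i).
  rewrite size_cat size_nseq size_w all_cat all_nseq k_gt0 orbT andbT.
  rewrite (sub_all letters_lt) //.
  by split=> //; lia.
apply: no_col; apply: (@search_coloring_complete _ _ _ (f \o embed)) => [i _|i j].
  exact: f_range.
case/andP=> lt_ij lt_j eq_f; have lt_i := ltn_trans lt_ij lt_j.
have [size_i size_iz letters_i] := valid_nth i lt_i.
have [size_j size_jz letters_j] := valid_nth j lt_j.
rewrite (nth_map [::]) // (nth_map [::]) // ltnNge; apply/negP => le_dist.
have /andP [_ le_C] := f_range (embed i).
have [p [ps lp sp letters_p]] := word_dist_walk (leq_trans le_dist le_C).
apply: (f_sep (embed i) (embed j) _ eq_f).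
  apply: contraTneq lt_ij => /(congr1 (@word_of k n)).
  rewrite !word_of_of_word // => /eqP; rewrite eqseq_cat ?size_i ?size_j //.
  by rewrite eqxx andbT nth_uniq // => /eqP ->; rewrite ltnn.
rewrite /embed -lp; apply: dist_le_padded (leq_trans sp le_dist) => //.
by apply: sub_all letters_p => w; apply: sub_all.
Qed.

Lemma packing_colorable_gt (T : finType) (e : rel T) c :
  (forall f, ~ packing_coloring e c f) -> forall c', packing_colorable e c' -> c < c'.
Proof.
move=> no_col c' [f [f_range f_sep]]; rewrite ltnNge; apply/negP => le_c'.
apply: (no_col f); split=> // x; have /andP [-> /leq_trans] := f_range x; exact.
Qed.

Definition W3 : seq (seq nat) := [:: [:: 0; 0]; [:: 1; 0]; [:: 0; 1]; [:: 1; 1]].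

Definition W4 : seq (seq nat) :=
  [:: [:: 1; 1]; [:: 0; 1]; [:: 2; 1]; [:: 3; 1];
      [:: 1; 2]; [:: 0; 2]; [:: 2; 2]; [:: 3; 2]].

Definition W5 : seq (seq nat) :=
  [:: [:: 2; 2; 1]; [:: 1; 2; 1]; [:: 2; 1; 1]; [:: 1; 1; 1]; [:: 3; 1; 1];
      [:: 0; 2; 1]; [:: 3; 2; 1]; [:: 2; 3; 1]; [:: 1; 3; 1]; [:: 3; 3; 1];
      [:: 1; 1; 2]; [:: 0; 1; 2]; [:: 1; 0; 2]; [:: 0; 0; 2]; [:: 2; 0; 2];
      [:: 2; 1; 2]; [:: 3; 1; 2]; [:: 1; 2; 2]; [:: 0; 2; 2]; [:: 2; 2; 2]].

Lemma packing_colorable_ge3 k n c :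
  2 <= k -> 2 <= n -> packing_colorable (SPk k n) c -> 3 <= c.
Proof.
move=> k2 n2; apply: packing_colorable_gt.
have no_col : ~~ search_coloring 2 (dist_table 2 2 W3) [::] (size W3) by vm_compute.
exact: (@no_packing_coloring k n 2 2 2 W3 k2 n2 erefl erefl no_col).
Qed.

Lemma packing_colorable_ge4 k n c :
  4 <= k -> 2 <= n -> packing_colorable (SPk k n) c -> 4 <= c.
Proof.
move=> k4 n2; apply: packing_colorable_gt.
have no_col : ~~ search_coloring 3 (dist_table 4 3 W4) [::] (size W4) by vm_compute.
exact: (@no_packing_coloring k n 4 2 3 W4 k4 n2 erefl erefl no_col).
Qed.

Lemma packing_colorable_ge5 k n c :
  4 <= k -> 3 <= n -> packing_colorable (SPk k n) c -> 5 <= c.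
Proof.
move=> k4 n3; apply: packing_colorable_gt.
have no_col : ~~ search_coloring 4 (dist_table 4 4 W5) [::] (size W5) by vm_compute.
exact: (@no_packing_coloring k n 4 3 4 W5 k4 n3 erefl erefl no_col).
Qed.

Theorem theorem3 (k n : nat) :
  3 <= k -> 2 <= n ->
  [/\ (k = 3 -> packing_chromatic_number_is (SPk k n) 3),
      (4 <= k -> n = 2 -> packing_chromatic_number_is (SPk k n) 4) &
      (4 <= k -> 3 <= n -> packing_chromatic_number_is (SPk k n) 5)].
Proof.
move=> k3 n2; split=> [->|k4 ->|k4 n3]; split.
- exact: packing_colorable3.
- by move=> c; apply: packing_colorable_ge3.
- exact: packing_colorable4.
- by move=> c; apply: packing_colorable_ge4.
- exact: packing_colorable5.
- by move=> c; apply: packing_colorable_ge5.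
Qed.
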